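(* Let $\mathcal S=(\mathcal P,\mathcal L)$ be a linear space with $v$ points and constant line size $k$, $2<k<v$, and $b$ lines; let $G\le\mathrm{Aut}(\mathcal S)$ be transitive on lines, and let $\mathfrak C$ be a non-trivial $G$-invariant partition of $\mathcal P$ with $d$ classes of size $c$. If the permutation group $G^{\mathfrak C}$ induced by $G$ on $\mathfrak C$ contains the alternating group $\mathrm{Alt}_d$ on $\mathfrak C$, then $\mathrm{lcm}_{i=1}^{k}\binom{d}{d_i}$ divides $b$.
   Context: A linear space: a finite set $\mathcal P$ of points and a set $\mathcal L$ of subsets (lines) such that any two distinct points lie on exactly one line and each line has at least two points. For a line $\lambda$ and $0\le i\le k$, $d_i$ is the number of classes $C\in\mathfrak C$ with $|C\cap\lambda|=i$ (independent of $\lambda$ by line-transitivity). *)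

From mathcomp Require Import all_boot all_order all_fingroup.
Set Implicit Arguments. Unset Strict Implicit. Unset Printing Implicit Defensive.

(* Points: a finType T (so P = [set: T]); lines: L : {set {set T}}. *)

Definition linear_space (T : finType) (L : {set {set T}}) : Prop :=
  (forall x y : T, x != y ->
     exists l, [/\ l \in L, x \in l, y \in l &
                forall l', l' \in L -> x \in l' -> y \in l' -> l' = l])
  /\ (forall l, l \in L -> 2 <= #|l|).

Definition const_line_size (T : finType) (L : {set {set T}}) (k : nat) : Prop :=
  forall l, l \in L -> #|l| = k.

Definition automorphisms (T : finType) (L : {set {set T}}) (G : {group {perm T}}) : Prop :=
  forall g, g \in G -> forall l, l \in L -> [set g x | x in l] \in L.

Definition line_transitive (T : finType) (L : {set {set T}}) (G : {group {perm T}}) : Prop :=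
  forall l1 l2, l1 \in L -> l2 \in L -> exists2 g, g \in G & [set g x | x in l1] = l2.

Definition G_invariant_partition (T : finType) (G : {group {perm T}}) (C : {set {set T}}) : Prop :=
  partition C [set: T] /\
  (forall g, g \in G -> forall B, B \in C -> [set g x | x in B] \in C).

(* The group G^C induced by G on C contains Alt(C): every even permutation of
   the classes (a permutation of {set T} supported on C) is induced by some g in G. *)
Definition induced_contains_Alt (T : finType) (G : {group {perm T}}) (C : {set {set T}}) : Prop :=
  forall s : {perm {set T}}, perm_on C s -> ~~ odd_perm s ->
    exists2 g, g \in G & forall B, B \in C -> [set g x | x in B] = s B.

Definition d_i (T : finType) (C : {set {set T}}) (l : {set T}) (i : nat) : nat :=
  #|[set B in C | #|B :&: l| == i]|.

From mathcomp Require Import all_boot all_order all_fingroup.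
Set Implicit Arguments. Unset Strict Implicit. Unset Printing Implicit Defensive.

(* Fix i and let F_i(l) be the set of classes meeting the line l in exactly i
   points.  The map l |-> F_i(l) commutes with G, so its fibres over a G-orbit
   of subsets of C all have the same size.  If d > 2, the even permutations of
   C, all induced by G, are transitive on the subsets of C of a given size.
   If d = 2 and F_i(l) is a single class, G must swap the two classes: a
   G-invariant set of points meets every line in the same number of points,
   computed by counting flags, and two invariant classes of equal size would
   meet l equally.  Hence the lines are split into C(d, d_i) fibres of equal
   size. *)

Section Fibres.

Variables (X Y : finType) (A : {set X}) (f : X -> Y).

Definition fibre (y : Y) : {set X} := [set x in A | f x == y].

Lemma card_uniform_fibres (S : {set Y}) n :
  {in A, forall x, f x \in S} -> {in S, forall y, #|fibre y| = n} ->
  #|A| = #|S| * n.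
Proof.
move=> fAS fibre_n; rewrite -sum1_card (partition_big f (mem S)) //=.
rewrite -sum_nat_const; apply: eq_bigr => y Sy.
by rewrite -(fibre_n y Sy) -sum1_card; apply: eq_bigl => x; rewrite inE.
Qed.

Lemma card_fibre_equivariant (h : X -> X) (h' : Y -> Y) y :
  injective h -> injective h' -> h @: A \subset A ->
  {in A, forall x, f (h x) = h' (f x)} ->
  #|fibre (h' y)| = #|fibre y|.
Proof.
move=> inj_h inj_h' hA fh.
have hA_eq : h @: A = A by apply/eqP; rewrite eqEcard hA card_imset ?leqnn.
suff -> : fibre (h' y) = h @: fibre y by rewrite card_imset.
apply/setP => x; apply/idP/imsetP => [|[z]].
  rewrite inE => /andP [Ax /eqP fx].
  move: Ax; rewrite -hA_eq => /imsetP [z Az xE]; exists z => //.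
  by rewrite inE Az -(inj_eq inj_h') -fh // -xE fx /=.
rewrite inE => /andP [Az /eqP <-] ->.
by rewrite inE fh // eqxx andbT -hA_eq imset_f.
Qed.

End Fibres.

Lemma imset_perm1 (X : finType) (A : {set X}) : (1%g : {perm X}) @: A = A.
Proof. by rewrite (eq_imset _ (@perm1 _)) imset_id. Qed.

Section MovingSubsets.

Variables (X : finType) (C : {set X}).

Lemma perm_on_tperm a b : a \in C -> b \in C -> perm_on C (tperm a b).
Proof.
move=> aC bC; apply: subset_trans (tperm_on a b) _.
by apply/subsetP => x /set2P [] ->.
Qed.

Lemma tperm_imset_id (D : {set X}) a b :
  (a \in D) = (b \in D) -> tperm a b @: D = D.
Proof.
move=> abD; apply/eqP; rewrite eqEcard card_imset ?leqnn ?andbT //; last exact: perm_inj.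
apply/subsetP => _ /imsetP [x xD ->].
by case: tpermP => [xa|xb|//]; [rewrite -abD -xa | rewrite abD -xb].
Qed.

Lemma perm_on_move (D1 D2 : {set X}) :
  D1 \subset C -> D2 \subset C -> #|D1| = #|D2| ->
  exists2 s : {perm X}, perm_on C s & s @: D1 = D2.
Proof.
move: {-1}#|D1 :\: D2| (leqnn #|D1 :\: D2|) => n.
elim: n D1 => [|n IHn] D1 Dn sD1C sD2C eqD.
  exists 1%g; first exact: perm_on1.
  rewrite imset_perm1; apply/eqP.
  by rewrite eqEcard eqD leqnn andbT -setD_eq0 -cards_eq0 -leqn0.
case: (boolP (D1 \subset D2)) => [sD12 | /subsetPn [a aD1 aD2]].
  by apply: IHn => //; rewrite -setD_eq0 in sD12; rewrite (eqP sD12) cards0.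
have [b bD2 bD1] : exists2 b, b \in D2 & b \notin D1.
  apply/subsetPn/negP => /(subset_cardP (esym eqD)) /(_ a) eqa.
  by rewrite eqa aD1 in aD2.
have tabC : perm_on C (tperm a b).
  by apply: perm_on_tperm; [apply: (subsetP sD1C) | apply: (subsetP sD2C)].
have D1'_diff : (tperm a b @: D1) :\: D2 \subset (D1 :\: D2) :\ a.
  apply/subsetP => _ /setDP [/imsetP [x xD1 ->]]; rewrite !inE.
  case: tpermP => [_|xb|/eqP xa _]; first by rewrite bD2.
    by rewrite -xb xD1 in bD1.
  by rewrite xa xD1 andbT.
have [s sC sD1'] : exists2 s : {perm X}, perm_on C s & s @: (tperm a b @: D1) = D2.
  apply: IHn => //.
  - apply: leq_trans (subset_leq_card D1'_diff) _.
    by rewrite (cardsD1 a (D1 :\: D2)) !inE aD1 aD2 in Dn.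
  - apply/subsetP => _ /imsetP [x xD1 ->].
    by rewrite (perm_closed _ tabC) (subsetP sD1C).
  - by rewrite card_imset //; apply: perm_inj.
exists (tperm a b * s)%g; first exact: perm_onM.
by rewrite -sD1' -imset_comp; apply: eq_imset => x; rewrite permM.
Qed.

Lemma even_perm_on_move (D1 D2 : {set X}) :
  2 < #|C| -> D1 \subset C -> D2 \subset C -> #|D1| = #|D2| ->
  exists2 s : {perm X}, perm_on C s && ~~ odd_perm s & s @: D1 = D2.
Proof.
move=> C_gt2 sD1C sD2C eqD.
have [s sC sD12] := perm_on_move sD1C sD2C eqD.
case: (boolP (odd_perm s)) => [odd_s | even_s]; last by exists s; rewrite ?sC.
have [u [v [uC vC uv uvD2]]] :
    exists u v, [/\ u \in C, v \in C, u != v & (u \in D2) = (v \in D2)].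
  have /card_gt2P [x [y [z [[xC yC zC] [xy yz zx]]]]] := C_gt2.
  case: (eqVneq (x \in D2) (y \in D2)) => [xyD2 | xyD2]; first by exists x, y.
  case: (eqVneq (y \in D2) (z \in D2)) => [yzD2 | yzD2]; first by exists y, z.
  exists z, x; split => //; move: xyD2 yzD2.
  by case: (x \in D2); case: (y \in D2); case: (z \in D2).
exists (s * tperm u v)%g.
  by rewrite perm_onM ?perm_on_tperm // odd_permM odd_s odd_tperm uv.
rewrite -[RHS](tperm_imset_id uvD2) -sD12 -imset_comp.
by apply: eq_imset => x; rewrite permM.
Qed.

End MovingSubsets.

Lemma sum_bool_card (X : finType) (A : {set X}) (P : pred X) :
  \sum_(x in A) (P x : nat) = #|[set x in A | P x]|.
Proof.
rewrite -sum1_card big_mkcond [RHS]big_mkcond /=; apply: eq_bigr => x _.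
by rewrite inE; case: (x \in A); case: (P x).
Qed.

Lemma incidence_double_count (T : finType) (L : {set {set T}}) (B : {set T}) :
  \sum_(p in B) #|[set l in L | p \in l]| = \sum_(l in L) #|B :&: l|.
Proof.
under eq_bigr do rewrite -sum_bool_card.
rewrite exchange_big; apply: eq_bigr => l _; rewrite sum_bool_card.
by apply: eq_card => p; rewrite !inE.
Qed.

Section LineTransitiveSpace.

Variables (T : finType) (L : {set {set T}}) (k : nat) (G : {group {perm T}}).
Hypotheses (L_linear : linear_space L) (L_size : const_line_size L k).

Lemma card_lines_through p : #|[set l in L | p \in l]| * k.-1 = #|T|.-1.
Proof.
set Lp := [set l in L | p \in l].
have one_line q : q \in [set~ p] -> #|[set l in Lp | q \in l]| = 1.
  rewrite !inE eq_sym => pq; have [l [lL pl ql l_uniq]] := L_linear.1 p q pq.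
  apply/eqP/cards1P; exists l; apply/setP => l'; rewrite !inE.
  apply/idP/eqP => [/andP [/andP [l'L pl'] ql'] | ->]; last by rewrite lL pl ql.
  exact: l_uniq.
have rest_of_line l : l \in Lp -> #|[set~ p] :&: l| = k.-1.
  rewrite inE => /andP [lL pl].
  by rewrite -(L_size lL) (cardsD1 p l) pl setIC -setDE.
rewrite -sum_nat_const -(eq_bigr _ rest_of_line) -incidence_double_count.
by rewrite (eq_bigr _ one_line) sum_nat_const muln1 cardsC1.
Qed.

Hypothesis L_transitive : line_transitive L G.

Lemma invariant_set_meets_lines (B l : {set T}) :
  l \in L -> (forall g, g \in G -> [set g x | x in B] = B) ->
  #|L| * #|B :&: l| * k.-1 = #|B| * #|T|.-1.
Proof.
move=> lL B_inv.
have same_meet l' : l' \in L -> #|B :&: l'| = #|B :&: l|.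
  move=> l'L; have [g gG <-] := L_transitive lL l'L; have g_inj := @perm_inj _ g.
  by rewrite -{1}(B_inv g gG) -imsetI ?card_imset //; apply: in2W.
rewrite -sum_nat_const -(eq_bigr _ same_meet) -incidence_double_count big_distrl /=.
by rewrite -sum_nat_const; apply: eq_bigr => p _; apply: card_lines_through.
Qed.

Lemma invariant_sets_meet_lines_equally (B1 B2 l : {set T}) :
  1 < k -> l \in L -> #|B1| = #|B2| ->
  (forall g, g \in G -> [set g x | x in B1] = B1) ->
  (forall g, g \in G -> [set g x | x in B2] = B2) ->
  #|B1 :&: l| = #|B2 :&: l|.
Proof.
move=> k_gt1 lL eqB B1_inv B2_inv; apply/eqP.
have L_gt0 : 0 < #|L| by apply/card_gt0P; exists l.
have k1_gt0 : 0 < k.-1 by rewrite ltn_predRL.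
by rewrite -(eqn_pmul2l L_gt0) -(eqn_pmul2r k1_gt0) !invariant_set_meets_lines // eqB.
Qed.

End LineTransitiveSpace.

(* [d_i C l i] is [#|classes_meeting C i l|]; the line comes last so that
   [classes_meeting C i] is a map on lines. *)
Definition classes_meeting (T : finType) (C : {set {set T}}) (i : nat) (l : {set T}) :=
  [set B in C | #|B :&: l| == i].

Lemma classes_meeting_perm (T : finType) (C : {set {set T}}) (g : {perm T}) i
    (l : {set T}) :
  (forall B : {set T}, B \in C -> [set g x | x in B] \in C) ->
  classes_meeting C i [set g x | x in l] =
    [set [set g x | x in B] | B : {set T} in classes_meeting C i l].
Proof.
move=> gC; have g_inj := @perm_inj _ g.
have meet_perm (B : {set T}) :
    #|[set g x | x in B] :&: [set g x | x in l]| = #|B :&: l|.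
  by rewrite -imsetI ?card_imset //; apply: in2W.
have gC_onto : [set [set g x | x in B] | B : {set T} in C] = C.
  apply/eqP; rewrite eqEcard card_imset; last exact: imset_inj.
  by rewrite leqnn andbT; apply/subsetP => _ /imsetP [B BC ->]; apply: gC.
apply/setP => B'; rewrite inE; apply/andP/imsetP => [[] | [B]].
  rewrite -{1}gC_onto => /imsetP [B BC ->]; rewrite meet_perm => meet_i.
  by exists B; rewrite ?inE ?BC.
by rewrite inE => /andP [BC meet_i] ->; rewrite gC // meet_perm.
Qed.

Lemma set1_of_subset_set2 (X : finType) (a b : X) (D : {set X}) :
  D \subset [set a; b] -> a \in D -> b \notin D -> D = [set a].
Proof.
move=> sDab aD bD; apply/setP => x; rewrite inE; apply/idP/eqP => [xD | -> //].
by have /set2P [//|xb] := subsetP sDab x xD; rewrite -xb xD in bD.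
Qed.

Lemma Alt_transitive_on_subsets (T : finType) (G : {group {perm T}})
    (C D1 D2 : {set {set T}}) :
  induced_contains_Alt G C -> 2 < #|C| ->
  D1 \subset C -> D2 \subset C -> #|D1| = #|D2| ->
  exists2 g, g \in G & [set [set g x | x in B] | B : {set T} in D1] = D2.
Proof.
move=> C_Alt C_gt2 sD1C sD2C eqD.
have [s /andP [sC even_s] sD12] := even_perm_on_move C_gt2 sD1C sD2C eqD.
have [g gG gs] := C_Alt s sC even_s.
by exists g; rewrite // -sD12; apply: eq_in_imset => B /(subsetP sD1C); apply: gs.
Qed.

Section ClassesOfLineTransitiveSpace.

Variables (T : finType) (L : {set {set T}}) (k c : nat).
Variables (G : {group {perm T}}) (C : {set {set T}}).
Hypotheses (L_linear : linear_space L) (L_size : const_line_size L k).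
Hypothesis k_gt1 : 1 < k.
Hypotheses (L_aut : automorphisms L G) (L_transitive : line_transitive L G).
Hypotheses (C_inv : forall g, g \in G -> forall B, B \in C -> [set g x | x in B] \in C).
Hypotheses (C_size : forall B, B \in C -> #|B| = c) (C_Alt : induced_contains_Alt G C).

Lemma two_classes_swapped (l B1 B2 : {set T}) :
  l \in L -> C \subset [set B1; B2] -> B1 \in C -> B2 \in C ->
  #|B1 :&: l| != #|B2 :&: l| ->
  exists2 g, g \in G & [set g x | x in B1] = B2.
Proof.
move=> lL C_pair B1C B2C meet_neq.
case: (pickP [pred g in G | [set g x | x in B1] == B2]).
  by move=> g /andP [gG /eqP]; exists g.
move=> no_swap.
have B12 : B1 != B2 by apply: contraNneq meet_neq => ->.
have B1_inv g : g \in G -> [set g x | x in B1] = B1.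
  move=> gG; have /set2P [//|gB1] := subsetP C_pair _ (C_inv gG B1C).
  by have := no_swap g; rewrite /= gG gB1 eqxx.
have B2_inv g : g \in G -> [set g x | x in B2] = B2.
  move=> gG; have /set2P [gB2|//] := subsetP C_pair _ (C_inv gG B2C).
  case/eqP: B12; apply: (imset_inj (@perm_inj _ g)).
  by rewrite B1_inv ?gB2.
case/eqP: meet_neq.
by apply: (invariant_sets_meet_lines_equally L_linear L_size L_transitive);
  rewrite ?C_size.
Qed.

Lemma classes_meeting_transitive i (l : {set T}) (D : {set {set T}}) :
  l \in L -> D \subset C -> #|D| = #|classes_meeting C i l| ->
  exists2 g, g \in G &
    [set [set g x | x in B] | B : {set T} in classes_meeting C i l] = D.
Proof.
set F := classes_meeting C i l => lL sDC eqD.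
have sFC : F \subset C by apply/subsetP => B; rewrite inE => /andP [].
case: (eqVneq F D) => [<- | FD].
  exists 1%g; first exact: group1.
  by rewrite -[RHS]imset_id; apply: eq_imset => B; exact: imset_perm1.
case: (ltnP 2 #|C|) => [C_gt2 | C_le2].
  exact: Alt_transitive_on_subsets C_Alt C_gt2 sFC sDC (esym eqD).
have [B1 B1F B1D] : exists2 B1, B1 \in F & B1 \notin D.
  by apply/subsetPn; apply: contraNN FD => sFD; rewrite eqEcard sFD eqD leqnn.
have [B2 B2D B2F] : exists2 B2, B2 \in D & B2 \notin F.
  by apply/subsetPn; apply: contraNN FD => sDF; rewrite eq_sym eqEcard sDF eqD leqnn.
have B1C := subsetP sFC B1 B1F; have B2C := subsetP sDC B2 B2D.
have B12 : B1 != B2 by apply: contraNneq B2F => <-.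
have C_pair : [set B1; B2] = C.
  by apply/eqP; rewrite eqEcard subUset !sub1set B1C B2C cards2 B12.
have [g gG gB12] : exists2 g, g \in G & [set g x | x in B1] = B2.
  apply: (two_classes_swapped lL) => //; first by rewrite C_pair.
  by move: B1F B2F; rewrite /F !inE B1C B2C /= => /eqP -> B2l; rewrite eq_sym B2l.
have F1 : F = [set B1] by apply: (set1_of_subset_set2 _ B1F B2F); rewrite C_pair.
have D2 : D = [set B2] by apply: (set1_of_subset_set2 _ B2D B1D); rewrite setUC C_pair.
by exists g; rewrite // F1 D2 imset_set1 gB12.
Qed.

Lemma card_lines_by_classes_meeting i (l : {set T}) :
  l \in L ->
  #|L| = 'C(#|C|, #|classes_meeting C i l|) *
         #|fibre L (classes_meeting C i) (classes_meeting C i l)|.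
Proof.
set F := classes_meeting C i l => lL.
have gF_sub g : g \in G -> [set [set g x | x in B] | B : {set T} in F] \subset C.
  by move=> gG; apply/subsetP => _ /imsetP [B /setIdP [BC _] ->]; apply: C_inv.
rewrite -cards_draws.
apply: (@card_uniform_fibres _ _ L (classes_meeting C i)) => [l' l'L | D].
  have [g gG <-] := L_transitive lL l'L.
  rewrite inE classes_meeting_perm; last exact: C_inv.
  by rewrite gF_sub // card_imset ?eqxx //; exact: (imset_inj (@perm_inj _ g)).
rewrite inE => /andP [sDC /eqP eqD].
have [g gG <-] := classes_meeting_transitive lL sDC eqD.
apply: (@card_fibre_equivariant _ _ L (classes_meeting C i)
          (fun l' => [set g x | x in l'])
          (fun D => [set [set g x | x in B] | B : {set T} in D])).
- exact: (imset_inj (@perm_inj _ g)).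
- exact: (imset_inj (imset_inj (@perm_inj _ g))).
- by apply/subsetP => _ /imsetP [l' l'L ->]; apply: L_aut.
- by move=> l' _; apply: classes_meeting_perm; apply: C_inv.
Qed.

End ClassesOfLineTransitiveSpace.

Theorem lemma4p8 (T : finType) (L : {set {set T}}) (k c d : nat)
  (G : {group {perm T}}) (C : {set {set T}}) :
  linear_space L ->
  const_line_size L k ->
  2 < k -> k < #|T| ->
  automorphisms L G ->
  line_transitive L G ->
  G_invariant_partition G C ->
  (forall B, B \in C -> #|B| = c) ->
  #|C| = d ->
  1 < c -> c < #|T| ->
  induced_contains_Alt G C ->
  forall l, l \in L ->
    (\big[lcmn/1%N]_(1 <= i < k.+1) 'C(d, d_i C l i)) %| #|L|.
Proof.
move=> L_linear L_size k_gt2 _ L_aut L_transitive [_ C_inv] C_size <- _ _ C_Alt l lL.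
apply: (big_ind (fun m => m %| #|L|)) => [|m n m_dvd n_dvd|i _].
- exact: dvd1n.
- by rewrite dvdn_lcm m_dvd n_dvd.
- rewrite (card_lines_by_classes_meeting L_linear L_size (ltnW k_gt2) L_aut
    L_transitive C_inv C_size C_Alt i lL).
  exact: dvdn_mulr.
Qed.
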